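(* Let $(S,\circ)$ be a right loop and let $T$ be an invariant right subloop of $S$ with $|T|=2$ such that the quotient right loop $S/T$ is a group. Then the group torsion $G_S$ of $S$ is an elementary abelian $2$-group.
   Context: A right loop is a set $S$ with a binary operation $\circ$ having a two-sided identity $1$ such that for all $a,b\in S$ the equation $X\circ a=b$ has a unique solution $X\in S$. A right subloop is a nonempty subset that is a right loop under the induced operation. A congruence on $S$ is an equivalence relation on $S$ which is a right subloop of $S\times S$ (componentwise operation). An invariant right subloop $T$ of $S$ is the equivalence class of $1$ of some congruence $R$ on $S$; the quotient $S/T=\{T\circ x\mid x\in S\}$ (the set of $R$-classes, where $T\circ x=\{t\circ x: t\in T\}$) is a right loop with operation $(T\circ x)\circ(T\circ y)=T\circ(x\circ y)$. For $y,z\in S$, $f^S(y,z):S\to S$ is the bijection with $f^S(y,z)(x)$ the unique solution $X$ of $X\circ(y\circ z)=(x\circ y)\circ z$; the group torsion $G_S$ is the subgroup of $\mathrm{Sym}(S)$ generated by all $f^S(y,z)$, $y,z\in S$. *)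

Definition is_right_loop {S : Type} (op : S -> S -> S) (one : S) : Prop :=
  (forall a, op one a = a /\ op a one = a) /\
  (forall a b, exists! X, op X a = b).

Definition right_subloop {T : Type} (op : T -> T -> T) (P : T -> Prop) : Prop :=
  (exists a, P a) /\
  (forall a b, P a -> P b -> P (op a b)) /\
  (exists e, P e /\ forall a, P a -> op e a = a /\ op a e = a) /\
  (forall a b, P a -> P b -> exists! X, P X /\ op X a = b).

Definition pairop {S : Type} (op : S -> S -> S) (p q : S * S) : S * S :=
  (op (fst p) (fst q), op (snd p) (snd q)).

Definition congruence {S : Type} (op : S -> S -> S) (R : S -> S -> Prop) : Prop :=
  (forall x, R x x) /\
  (forall x y, R x y -> R y x) /\
  (forall x y z, R x y -> R y z -> R x z) /\
  right_subloop (pairop op) (fun p => R (fst p) (snd p)).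

Definition card2 {S : Type} (P : S -> Prop) : Prop :=
  exists a b, a <> b /\ forall x, P x <-> (x = a \/ x = b).

(* The quotient right loop S/T (T = R-class of one), whose elements are the
   R-classes with operation [x][y] = [x o y], is a group: the group axioms
   written out on classes ([x] = [y] iff R x y). *)
Definition quotient_is_group {S : Type} (op : S -> S -> S) (one : S)
  (R : S -> S -> Prop) : Prop :=
  (forall x y z, R (op (op x y) z) (op x (op y z))) /\
  (forall x, R (op one x) x /\ R (op x one) x) /\
  (forall x, exists y, R (op x y) one /\ R (op y x) one).

Definition is_bij {S : Type} (h : S -> S) : Prop :=
  exists k : S -> S, (forall x, k (h x) = x) /\ (forall x, h (k x) = x).

Definition perm_subgroup {S : Type} (P : (S -> S) -> Prop) : Prop :=
  (forall h, P h -> is_bij h) /\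
  P (fun x => x) /\
  (forall g h, P g -> P h -> P (fun x => g (h x))) /\
  (forall h k, P h -> (forall x, k (h x) = x) -> (forall x, h (k x) = x) -> P k).

(* h = f^S(y,z) for some y z: h x is the (unique) solution X of
   X o (y o z) = (x o y) o z. *)
Definition torsion_gen {S : Type} (op : S -> S -> S) (h : S -> S) : Prop :=
  exists y z, forall x, op (h x) (op y z) = op (op x y) z.

(* The group torsion G_S: the subgroup of Sym(S) generated by all f^S(y,z),
   i.e. the intersection of all subgroups of Sym(S) containing them. *)
Definition torsion_group {S : Type} (op : S -> S -> S) (h : S -> S) : Prop :=
  forall P : (S -> S) -> Prop, perm_subgroup P ->
    (forall g, torsion_gen op g -> P g) -> P h.

Definition elem_abelian_2 {S : Type} (G : (S -> S) -> Prop) : Prop :=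
  forall g h, G g -> G h ->
    (forall x, g (g x) = x) /\ (forall x, g (h x) = h (g x)).

(* Every torsion generator f(y,z) preserves the congruence classes: in the
   group S/T the classes of f(y,z)(x) o (y o z) and x o (y o z) coincide by
   associativity, and right cancellation in S/T gives [f(y,z)(x)] = [x].
   Hence the whole group torsion consists of class-preserving bijections.
   Since every class T o x has at most |T| = 2 elements, a class-preserving
   injection either fixes a class pointwise or swaps its two elements; such
   maps are involutions and any two of them commute. *)

From Stdlib Require Import Classical ClassicalEpsilon.

Definition at_most_two_per_class {S : Type} (E : S -> S -> Prop) : Prop :=
  forall x y z w, E x y -> E x z -> E x w -> y = z \/ y = w \/ z = w.

Section ClassPreservingMaps.

Context {S : Type} (E : S -> S -> Prop).
Hypothesis E_refl : forall x, E x x.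
Hypothesis E_sym : forall x y, E x y -> E y x.
Hypothesis E_trans : forall x y z, E x y -> E y z -> E x z.

Definition class_preserving_bij (h : S -> S) : Prop :=
  is_bij h /\ forall x, E x (h x).

Lemma class_preserving_subgroup : perm_subgroup class_preserving_bij.
Proof.
  split; [|split; [|split]].
  - intros h [Hb _]; exact Hb.
  - split; [exists (fun x => x); split; reflexivity | exact E_refl].
  - intros g h [[g' [G1 G2]] Hg] [[h' [K1 K2]] Hh]. split.
    + exists (fun x => h' (g' x)). split; intro x.
      * rewrite G1; apply K1.
      * rewrite K2; apply G2.
    + intro x. exact (E_trans _ _ _ (Hh x) (Hg _)).
  - intros h k [_ Hh] E1 E2. split.
    + exists h; split; assumption.
    + intro x. apply E_sym. pose proof (Hh (k x)) as Hkx. rewrite E2 in Hkx. exact Hkx.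
Qed.

Hypothesis E_two : at_most_two_per_class E.

Section OneMap.

Variable g : S -> S.
Hypothesis g_inj : forall u v, g u = g v -> u = v.
Hypothesis g_class : forall x, E x (g x).

Lemma class_preserving_involutive x : g (g x) = x.
Proof.
  destruct (E_two x (g (g x)) (g x) x
              (E_trans _ _ _ (g_class x) (g_class _)) (g_class x) (E_refl x))
    as [Hx | [Hx | Hx]].
  - apply g_inj in Hx. rewrite Hx. exact Hx.
  - exact Hx.
  - rewrite Hx. exact Hx.
Qed.

Lemma class_preserving_fixes_class x y : g x = x -> E x y -> g y = y.
Proof.
  intros gx Exy.
  destruct (E_two x (g y) y x (E_trans _ _ _ Exy (g_class y)) Exy (E_refl x))
    as [Hy | [Hy | Hy]].
  - exact Hy.
  - rewrite <- gx in Hy. apply g_inj in Hy. rewrite Hy. exact gx.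
  - rewrite Hy. exact gx.
Qed.

End OneMap.

Lemma class_preserving_commute (g h : S -> S) :
  (forall u v, g u = g v -> u = v) -> (forall x, E x (g x)) ->
  (forall u v, h u = h v -> u = v) -> (forall x, E x (h x)) ->
  forall x, g (h x) = h (g x).
Proof.
  intros g_inj g_class h_inj h_class x.
  destruct (classic (g x = x)) as [gx | gx].
  - rewrite gx. exact (class_preserving_fixes_class g g_inj g_class x _ gx (h_class x)).
  - destruct (classic (h x = x)) as [hx | hx].
    + rewrite hx.
      symmetry; exact (class_preserving_fixes_class h h_inj h_class x _ hx (g_class x)).
    + destruct (E_two x (g x) (h x) x (g_class x) (h_class x) (E_refl x))
        as [gh | [? | ?]]; [|contradiction|contradiction].
      rewrite <- gh at 1. rewrite (class_preserving_involutive g g_inj g_class), gh.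
      symmetry; exact (class_preserving_involutive h h_inj h_class x).
Qed.

End ClassPreservingMaps.

Section RightLoop.

Context {S : Type} (op : S -> S -> S) (one : S).
Hypothesis HS : is_right_loop op one.

Lemma right_cancel u v w : op u w = op v w -> u = v.
Proof.
  intro Huv. destruct (proj2 HS w (op v w)) as [X [_ HX]].
  rewrite <- (HX u Huv). apply HX; reflexivity.
Qed.

Definition rdiv (b a : S) : S := epsilon (inhabits one) (fun X => op X a = b).

Lemma rdivK b a : op (rdiv b a) a = b.
Proof.
  unfold rdiv. apply (epsilon_spec (inhabits one) (fun X => op X a = b)).
  destruct (proj2 HS a b) as [X [HX _]]. exists X; exact HX.
Qed.

Lemma torsion_gen_bij g : torsion_gen op g -> is_bij g.
Proof.
  intros [y [z Hg]].
  exists (fun x => rdiv (rdiv (op x (op y z)) z) y). split; intro x.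
  - apply (right_cancel _ _ y), (right_cancel _ _ z).
    rewrite !rdivK, Hg. reflexivity.
  - apply (right_cancel _ _ (op y z)). rewrite Hg, !rdivK. reflexivity.
Qed.

Variable R : S -> S -> Prop.
Hypothesis HR : congruence op R.

Lemma congr_op p q r s : R p q -> R r s -> R (op p r) (op q s).
Proof.
  intros Hpq Hrs. destruct HR as [_ [_ [_ [_ [Hcl _]]]]].
  exact (Hcl (p, q) (r, s) Hpq Hrs).
Qed.

Lemma congr_class_translate x y : R x y -> exists t, R one t /\ y = op t x.
Proof.
  intro Hxy. destruct HR as [Rrefl [Rsym [_ [_ [_ [_ Rdiv]]]]]].
  destruct (Rdiv (x, x) (y, x) (Rrefl x) (Rsym _ _ Hxy))
    as [[X1 X2] [[HX Hop] _]].
  injection Hop as Hy Hx; simpl in HX.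
  assert (X2 = one) as ->.
  { apply (right_cancel _ _ x). rewrite Hx. symmetry; apply HS. }
  exists X1. split; [apply Rsym; exact HX | symmetry; exact Hy].
Qed.

Lemma congr_card2_classes : card2 (fun x => R one x) -> at_most_two_per_class R.
Proof.
  intros [a [b [_ Hab]]] x y z w Hy Hz Hw.
  destruct (congr_class_translate _ _ Hy) as [ty [Ty ->]].
  destruct (congr_class_translate _ _ Hz) as [tz [Tz ->]].
  destruct (congr_class_translate _ _ Hw) as [tw [Tw ->]].
  apply Hab in Ty, Tz, Tw.
  destruct Ty as [->| ->]; destruct Tz as [->| ->]; destruct Tw as [->| ->]; auto.
Qed.

Hypothesis HQ : quotient_is_group op one R.

Lemma congr_rcancel u v w : R (op u w) (op v w) -> R u v.
Proof.
  destruct HR as [Rrefl [Rsym [Rtrans _]]]. destruct HQ as [Qassoc [_ Qinv]].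
  intro Huv. destruct (Qinv w) as [w' [Hw' _]].
  assert (Hundo : forall t, R (op (op t w) w') t).
  { intro t. apply (Rtrans _ _ _ (Qassoc t w w')).
    rewrite <- (proj2 (proj1 HS t)) at 2. apply congr_op; [apply Rrefl | exact Hw']. }
  apply (Rtrans _ _ _ (Rsym _ _ (Hundo u))).
  exact (Rtrans _ _ _ (congr_op _ _ _ _ Huv (Rrefl w')) (Hundo v)).
Qed.

Lemma torsion_gen_class_preserving g : torsion_gen op g -> forall x, R x (g x).
Proof.
  intros [y [z Hg]] x. destruct HR as [_ [Rsym _]].
  apply Rsym, (congr_rcancel _ _ (op y z)).
  rewrite Hg. apply HQ.
Qed.

Lemma torsion_group_class_preserving h :
  torsion_group op h -> class_preserving_bij R h.
Proof.
  destruct HR as [Rrefl [Rsym [Rtrans _]]].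
  intro Hh. apply Hh.
  - exact (class_preserving_subgroup R Rrefl Rsym Rtrans).
  - intros g Hg. split; [exact (torsion_gen_bij g Hg) |].
    exact (torsion_gen_class_preserving g Hg).
Qed.

End RightLoop.

Lemma bij_injective {S : Type} (h : S -> S) : is_bij h -> forall u v, h u = h v -> u = v.
Proof.
  intros [k [Hk _]] u v Huv. rewrite <- (Hk u), <- (Hk v), Huv. reflexivity.
Qed.

Theorem mainTheorem4 (S : Type) (op : S -> S -> S) (one : S)
  (HS : is_right_loop op one)
  (R : S -> S -> Prop) (HR : congruence op R)
  (HT : card2 (fun x => R one x))
  (HQ : quotient_is_group op one R) :
  elem_abelian_2 (torsion_group op).
Proof.
  intros g h Hg Hh.
  destruct (torsion_group_class_preserving op one HS R HR HQ g Hg) as [g_bij g_class].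
  destruct (torsion_group_class_preserving op one HS R HR HQ h Hh) as [h_bij h_class].
  pose proof (congr_card2_classes op one HS R HR HT) as R_two.
  destruct HR as [Rrefl [Rsym [Rtrans _]]].
  split.
  - exact (class_preserving_involutive R Rrefl Rtrans R_two g (bij_injective g g_bij) g_class).
  - exact (class_preserving_commute R Rrefl Rtrans R_two g h
             (bij_injective g g_bij) g_class (bij_injective h h_bij) h_class).
Qed.
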